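(* Let $Q$ be a quiver whose underlying graph is a Dynkin diagram of type $A$, $D$ or $E$, with vertex set $I$. Let $A=\Pi_Q$ be its preprojective algebra over $\mathbb{C}$, graded by path length. Let $\theta_0\in HH^1(A)$ be the class of the derivation $D:A\to A$ determined by $D(e_i)=0$ for $i\in I$, $D(a)=0$ for $a\in Q$, and $D(a^* )=a^*$ for $a^*\in Q^*$. Equivalently, $D(b)=s(b)\,b$ for every path $b$, where $s(b)$ is the number of arrows of $b$ that lie in $Q^*$. Then for every $i\ge 0$ and every homogeneous $x\in HH_i(A)$ of degree $\deg(x)$, the Lie derivative satisfies $$\mathcal{L}_{\theta_0}(x)=\frac{\deg(x)}{2}\,x .$$
   Context: Let $Q$ be a quiver. Its double $\bar Q=Q\cup Q^*$ is obtained by adjoining, for each arrow $a\in Q$, a reversed arrow $a^*$. The path algebra $\mathbb{C}\bar Q$ has as basis all paths in $\bar Q$, including the trivial paths $e_i$ for $i\in I$. The product of two paths is their concatenation when they are compatible, and $0$ otherwise. The preprojective algebra is $\Pi_Q=\mathbb{C}\bar Q/\big(\sum_{a\in Q}(aa^*-a^*a)\big)$. It is graded by path length, with arrows in degree $1$. For $Q$ of ADE type it is finite dimensional. The defining relation is homogeneous in the number of $Q^*$-arrows, so $D$ is a well-defined derivation. $HH^\bullet(A)$ and $HH_\bullet(A)$ denote Hochschild cohomology and Hochschild homology of $A$ with coefficients in $A$. $HH_\bullet(A)$ carries the internal grading induced from the grading of $A$: a chain $a_0\otimes a_1\otimes\cdots\otimes a_n$ of homogeneous elements has degree $\sum_j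 \deg a_j$. For a derivation $D$ (a Hochschild $1$-cocycle), the Lie derivative acts on Hochschild chains by $\mathcal{L}_D(a_0\otimes\cdots\otimes a_n)=\sum_{j=0}^n a_0\otimes\cdots\otimes D(a_j)\otimes\cdots\otimes a_n$. This induces the action $\mathcal{L}_{\theta_0}$ on $HH_\bullet(A)$, which is part of the standard calculus structure (Daletski–Gelfand–Tsygan) on the pair $(HH^\bullet(A),HH_\bullet(A))$. *)

From mathcomp Require Import all_boot all_algebra.
From mathcomp Require Import Rstruct.
From mathcomp Require Import complex.
Set Implicit Arguments. Unset Strict Implicit. Unset Printing Implicit Defensive.
Import GRing.Theory.
Local Open Scope ring_scope.

Definition CC : numClosedFieldType := (Rdefinitions.R)[i].

Inductive dynkin_type := TypeA | TypeD | TypeE.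

Definition dynkin_ok (ty : dynkin_type) (n : nat) : bool :=
  match ty with
  | TypeA => 1 <= n
  | TypeD => 4 <= n
  | TypeE => (n == 6) || (n == 7) || (n == 8)
  end%N.

Definition dynkin_edge0 (ty : dynkin_type) (n : nat) (i j : nat) : bool :=
  match ty with
  | TypeA => j == i.+1
  | TypeD => ((j == i.+1) && (j <= n - 2)) || ((i == n - 3) && (j == n - 1))
  | TypeE => ((j == i.+1) && (j <= n - 2)) || ((i == 2) && (j == n - 1))
  end%N.

Definition dynkin_edge (ty : dynkin_type) (n : nat) (i j : 'I_n) : bool :=
  dynkin_edge0 ty n i j || dynkin_edge0 ty n j i.

Section Quiver.
Variables (n : nat) (Arr : finType) (src tgt : Arr -> 'I_n).

(* The underlying (multi)graph of Q is the Dynkin diagram of type ty: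
   after relabelling vertices by a bijection sigma, the number of arrows
   between two vertices (in either direction; loops counted once) is 1
   if they are joined by an edge of the diagram and 0 otherwise. *)
Definition narrows (x y : 'I_n) : nat :=
  #|[pred a : Arr | ((src a == x) && (tgt a == y)) || ((src a == y) && (tgt a == x))]|.

Definition is_ADE_quiver : Prop :=
  exists (ty : dynkin_type) (sigma : 'I_n -> 'I_n),
    [/\ dynkin_ok ty n, bijective sigma &
        forall i j : 'I_n, narrows (sigma i) (sigma j) = nat_of_bool (dynkin_edge ty i j)].

(* inl a = a in Q,  inr a = a^* in Q^* (reversed arrow). *)
Definition darrow := (Arr + Arr)%type.
Definition dsrc (x : darrow) : 'I_n := match x with inl a => src a | inr a => tgt a end.
Definition dtgt (x : darrow) : 'I_n := match x with inl a => tgt a | inr a => src a end.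
Definition is_star (x : darrow) : bool := if x is inr _ then true else false.

(* a path: its starting vertex and its list of arrows, traversed from left
   to right; (i, [::]) is the trivial path e_i *)
Definition dpath := ('I_n * seq darrow)%type.

Fixpoint composable (v : 'I_n) (l : seq darrow) : bool :=
  match l with
  | [::] => true
  | x :: l' => (dsrc x == v) && composable (dtgt x) l'
  end.

Definition valid_path (p : dpath) : bool := composable p.1 p.2.
Definition ptgt (p : dpath) : 'I_n := foldl (fun _ x => dtgt x) p.1 p.2.
Definition plen (p : dpath) : nat := size p.2.
Definition pstar (p : dpath) : nat := count is_star p.2.

(* product of paths in C Qbar: concatenation if compatible, else 0 (None) *)
Definition pmul (p q : dpath) : option dpath :=
  if ptgt p == q.1 then Some (p.1, p.2 ++ q.2) else None.
Definition pmul3 (p q r : dpath) : option dpath := obind (fun x => pmul x r) (pmul p q).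

(* A chain in (C Qbar)^{(x) m} is a formal finite linear combination of
   pure tensors p_0 (x) ... (x) p_{m-1} of paths, represented by a list of
   (coefficient, list of paths); its actual value is given by [coeff]. *)
Definition chain := seq (CC * seq dpath)%type.

Definition coeff (c : chain) (key : seq dpath) : CC :=
  \sum_(x <- c | x.2 == key) x.1.

Definition chain_scale (k : CC) (c : chain) : chain := [seq (k * x.1, x.2) | x <- c].
Definition chain_sub (c c' : chain) : chain := c ++ chain_scale (-1) c'.

Definition valid_chain (m : nat) (c : chain) : bool :=
  all (fun x => (size x.2 == m) && all valid_path x.2) c.

Definition key_deg (l : seq dpath) : nat := \sum_(p <- l) plen p.
Definition homogeneous (d : nat) (c : chain) : bool := all (fun x => key_deg x.2 == d) c.

(* Hochschild boundary on a pure tensor a_0 (x) ... (x) a_m  (m >= 1):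
   sum_{j<m} (-1)^j a_0..(a_j a_{j+1})..a_m + (-1)^m a_m a_0 (x) a_1..a_{m-1};
   zero on C_0. *)
Definition bterm (k : CC) (l : seq dpath) : chain :=
  match l with
  | a0 :: ((_ :: _) as rest) =>
    let m := size rest in
    flatten [seq match pmul (nth a0 l j) (nth a0 l j.+1) with
                 | Some p => [:: ((-1) ^+ j * k, take j l ++ p :: drop j.+2 l)]
                 | None => [::] end | j <- iota 0 m]
    ++ match pmul (last a0 rest) a0 with
       | Some p => [:: ((-1) ^+ m * k, p :: take m.-1 rest)]
       | None => [::] end
  | _ => [::]
  end.

Definition hoch_b (c : chain) : chain := flatten [seq bterm x.1 x.2 | x <- c].

(* Lie derivative L_D for the derivation D(b) = s(b) b:
   L_D(a_0 (x)..(x) a_m) = sum_j a_0 (x)..D(a_j)..(x) a_m. *)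
Definition lieD (c : chain) : chain :=
  [seq ((\sum_(p <- x.2) pstar p)%:R * x.1, x.2) | x <- c].

(* u * rho * v, rho = sum_{a in Q} (a a^* - a^* a), as a combination of paths *)
Definition rho_mul (u v : dpath) : seq (CC * dpath) :=
  flatten [seq (match pmul3 u (src a, [:: inl a; inr a]) v with
                | Some w => [:: (1, w)] | None => [::] end)
               ++ (match pmul3 u (tgt a, [:: inr a; inl a]) v with
                | Some w => [:: (-1, w)] | None => [::] end) | a <- enum Arr].

(* generator (k, j, others, u, v) of the kernel J_m of
   (C Qbar)^{(x) m} -> (Pi_Q)^{(x) m}:
   k * (others_0 (x)..(x) u rho v (in slot j) (x)..(x) others_{m-2}) *)
Definition gen := (CC * nat * seq dpath * dpath * dpath)%type.

Definition gen_chain (g : gen) : chain :=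
  let: (k, j, others, u, v) := g in
  [seq (k * x.1, take j others ++ x.2 :: drop j others) | x <- rho_mul u v].

Definition valid_gen (m : nat) (g : gen) : bool :=
  let: (k, j, others, u, v) := g in
  [&& (j < m)%N, size others == m.-1, all valid_path others, valid_path u & valid_path v].

(* c represents 0 in (Pi_Q)^{(x) m} *)
Definition inJ (m : nat) (c : chain) : Prop :=
  exists G : seq gen, all (valid_gen m) G /\
    forall key, coeff c key = coeff (flatten [seq gen_chain g | g <- G]) key.

End Quiver.

(* Choose lam : I -> C with lam (tgt a) = lam (src a) + 1/2 for every arrow a of Q;
   it exists because the Dynkin diagram is a tree. For a path p from u to w this
   gives lam u - lam w = s(p) - |p|/2, so D - deg/2 is the inner derivation [e, -]
   with e = sum_v lam v e_v. The Lie derivative along an inner derivation is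
   null-homotopic on Hochschild chains of the path algebra: inserting e in every
   slot with alternating signs gives a homotopy h with b h + h b = L_[e,-].
   As h only inserts idempotents, it maps the kernel of the projection onto
   Pi_Q^(x)m into the kernel in the next degree, so for a cycle c of Pi_Q we get
   L_D c - deg(c)/2 c = b (h c) + h (b c) with h (b c) = 0 in Pi_Q. *)

From Pilot Require Import Defs.
From mathcomp Require Import all_boot all_algebra.
From mathcomp Require Import ring zify.
Set Implicit Arguments. Unset Strict Implicit. Unset Printing Implicit Defensive.
Import GRing.Theory Num.Theory.
Local Open Scope ring_scope.

Section Pairing.
Variables (n : nat) (Arr : finType).
Local Notation dpath := (dpath n Arr).
Local Notation chain := (chain n Arr).

(* A chain is only meaningful through [coeff]; all identities between chains
   are proved by pairing them with an arbitrary functional on pure tensors. *)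
Definition pairing (X : chain) (psi : seq dpath -> CC) : CC :=
  \sum_(x <- X) x.1 * psi x.2.

Lemma pairing_nil psi : pairing [::] psi = 0.
Proof. by rewrite /pairing big_nil. Qed.

Lemma pairing_cons x X psi : pairing (x :: X) psi = x.1 * psi x.2 + pairing X psi.
Proof. by rewrite /pairing big_cons. Qed.

Lemma pairing_cat X Y psi : pairing (X ++ Y) psi = pairing X psi + pairing Y psi.
Proof. by rewrite /pairing big_cat. Qed.

Lemma pairing_flatten (T : Type) (F : T -> chain) (s : seq T) psi :
  pairing (flatten [seq F y | y <- s]) psi = \sum_(y <- s) pairing (F y) psi.
Proof.
elim: s => [|y s IH] /=; first by rewrite pairing_nil big_nil.
by rewrite pairing_cat IH big_cons.
Qed.

Lemma pairing_map (T : Type) (f : T -> CC * seq dpath) (s : seq T) psi :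
  pairing [seq f y | y <- s] psi = \sum_(y <- s) (f y).1 * psi (f y).2.
Proof. by rewrite /pairing big_map. Qed.

Lemma pairing_scale k X psi : pairing (chain_scale k X) psi = k * pairing X psi.
Proof.
rewrite /chain_scale pairing_map /pairing mulr_sumr.
by apply: eq_bigr => x _; rewrite mulrA.
Qed.

Lemma pairing_sub X Y psi : pairing (chain_sub X Y) psi = pairing X psi - pairing Y psi.
Proof. by rewrite /chain_sub pairing_cat pairing_scale mulN1r. Qed.

Lemma coeff_pairing X key : coeff X key = pairing X (fun s => (s == key)%:R).
Proof.
rewrite /coeff /pairing big_mkcond; apply: eq_bigr => x _.
by case: eqP => _; rewrite ?mulr1 ?mulr0.
Qed.

Lemma pairing_sumr (T : Type) (r : seq T) (f : T -> seq dpath -> CC) X :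
  pairing X (fun s => \sum_(i <- r) f i s) = \sum_(i <- r) pairing X (f i).
Proof. by rewrite /pairing exchange_big; apply: eq_bigr => x _; rewrite mulr_sumr. Qed.

Lemma pairing_scaler k (f : seq dpath -> CC) X :
  pairing X (fun s => k * f s) = k * pairing X f.
Proof. by rewrite /pairing mulr_sumr; apply: eq_bigr => x _; rewrite mulrCA. Qed.

Lemma pairing_subr f g X : pairing X (fun s => f s - g s) = pairing X f - pairing X g.
Proof. by rewrite /pairing -sumrN -big_split; apply: eq_bigr => x _; rewrite mulrBr. Qed.

Lemma eq_pairing X f g :
  (forall x, x \in X -> f x.2 = g x.2) -> pairing X f = pairing X g.
Proof.
move=> fg; rewrite /pairing big_seq_cond [RHS]big_seq_cond.
by apply: eq_bigr => x /andP[xX _]; rewrite fg.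
Qed.

Lemma sum_delta (T : eqType) (s : seq T) (y : T) (F : T -> CC) :
  uniq s -> y \in s -> \sum_(k <- s) (y == k)%:R * F k = F y.
Proof.
elim: s => // a s IH; rewrite cons_uniq inE big_cons => /andP[a_s us].
case: (eqVneq y a) => [->|ya] ys; last by rewrite mul0r add0r IH.
rewrite ?eqxx mul1r big1_seq ?addr0 // => k /andP[_ ks].
have /negPf -> : a != k by apply: contraNneq a_s => ->.
by rewrite mul0r.
Qed.

Lemma pairing_coeff_expand X psi (s : seq (seq dpath)) : uniq s ->
  {subset [seq x.2 | x <- X] <= s} ->
  pairing X psi = \sum_(k <- s) coeff X k * psi k.
Proof.
move=> us sub.
under eq_bigr => k _ do rewrite coeff_pairing /pairing mulr_suml.
rewrite exchange_big /pairing big_seq_cond [RHS]big_seq_cond.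
apply: eq_bigr => x /andP[xX _].
under eq_bigr => k _ do rewrite -mulrA.
by rewrite -mulr_sumr sum_delta // sub // map_f.
Qed.

Lemma eq_coeff_pairing X Y psi : (forall key, coeff X key = coeff Y key) ->
  pairing X psi = pairing Y psi.
Proof.
move=> XY; set s := undup ([seq x.2 | x <- X] ++ [seq x.2 | x <- Y]).
rewrite (@pairing_coeff_expand X psi s) ?undup_uniq //; last first.
  by move=> k kX; rewrite mem_undup mem_cat kX.
rewrite (@pairing_coeff_expand Y psi s) ?undup_uniq //; last first.
  by move=> k kY; rewrite mem_undup mem_cat kY orbT.
by apply: eq_bigr => k _; rewrite XY.
Qed.

Lemma pairing_lieD X psi :
  pairing (lieD X) psi = pairing X (fun s => (\sum_(p <- s) pstar p)%:R * psi s).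
Proof. by rewrite /lieD pairing_map; apply: eq_bigr => x _ /=; rewrite mulrCA mulrA. Qed.

End Pairing.

Section HochschildDual.
Variables (n : nat) (Arr : finType) (src tgt : Arr -> 'I_n).
Local Notation dpath := (dpath n Arr).
Local Notation pmul := (pmul src tgt).
Local Notation ptgt := (ptgt src tgt).
Local Notation bterm := (bterm src tgt).

Definition ofun (o : option dpath) (f : dpath -> CC) : CC :=
  if o is Some p then f p else 0.

Lemma eq_ofun o f g : f =1 g -> ofun o f = ofun o g.
Proof. by case: o => //= p ->. Qed.

Lemma ofun_if (b : bool) a f : ofun (if b then Some a else None) f = b%:R * f a.
Proof. by case: b; rewrite /= ?mul1r ?mul0r. Qed.

(* Transposes of the faces a_j (x) a_(j+1) |-> a_j a_(j+1) and
   a_m (x) a_0 |-> a_m a_0 of the Hochschild boundary. *)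
Definition face_dual psi (l : seq dpath) (j : nat) : CC :=
  if l is a0 :: _ then
    ofun (pmul (nth a0 l j) (nth a0 l j.+1)) (fun x => psi (take j l ++ x :: drop j.+2 l))
  else 0.

Definition last_face_dual psi (l : seq dpath) : CC :=
  if l is a0 :: rest then
    ofun (pmul (last a0 rest) a0) (fun x => psi (x :: take (size rest).-1 rest))
  else 0.

Definition bdual psi l := pairing (bterm 1 l) psi.

Lemma pairing_bterm_expand k a0 r psi : (0 < size r)%N ->
  pairing (bterm k (a0 :: r)) psi =
  k * (\sum_(0 <= j < size r) (-1)^+j * face_dual psi (a0 :: r) j
       + (-1)^+(size r) * last_face_dual psi (a0 :: r)).
Proof.
case: r => // a1 r _; rewrite /Defs.bterm pairing_cat pairing_flatten /index_iota subn0.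
rewrite mulrDr mulr_sumr; congr (_ + _); first apply: eq_bigr => j _.
all: rewrite /face_dual /last_face_dual; case: (pmul _ _) => [p|].
all: by rewrite ?pairing_cons pairing_nil /= ?addr0 ?mulr0 // mulrCA mulrA.
Qed.

Lemma bdual_cons psi a0 r : (0 < size r)%N ->
  bdual psi (a0 :: r) = \sum_(0 <= j < size r) (-1)^+j * face_dual psi (a0 :: r) j
       + (-1)^+(size r) * last_face_dual psi (a0 :: r).
Proof. by move=> r_gt0; rewrite /bdual pairing_bterm_expand // mul1r. Qed.

Lemma pairing_bterm k l psi : pairing (bterm k l) psi = k * bdual psi l.
Proof.
rewrite /bdual; case: l => [|a0 [|a1 r]]; rewrite ?pairing_nil ?mulr0 //.
by rewrite !pairing_bterm_expand // mul1r.
Qed.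

Lemma pairing_hoch_b X psi : pairing (hoch_b src tgt X) psi = pairing X (bdual psi).
Proof.
rewrite /hoch_b pairing_flatten [RHS]/pairing.
by apply: eq_bigr => x _; apply: pairing_bterm.
Qed.

Definition ins (q : nat) (x : dpath) (l : seq dpath) := take q l ++ x :: drop q l.
Definition ev (v : 'I_n) : dpath := (v, [::]).

Lemma ins_cons q x y l : ins q.+1 x (y :: l) = y :: ins q x l.
Proof. by []. Qed.

Lemma ins0 x l : ins 0 x l = x :: l.
Proof. by rewrite /ins take0 drop0. Qed.

Lemma size_ins q x l : size (ins q x l) = (size l).+1.
Proof. by rewrite /ins size_cat /= size_take size_drop; case: ltnP => h; lia. Qed.

Lemma all_ins (P : pred dpath) q x l : all P (ins q x l) = P x && all P l.
Proof. by rewrite /ins all_cat /= andbCA -all_cat cat_take_drop. Qed.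

Lemma ins_catl q x A B : (q <= size A)%N -> ins q x (A ++ B) = ins q x A ++ B.
Proof. by elim: A q => [|a A IH] [|q] //= qA; rewrite ?ins0 // !ins_cons IH. Qed.

Lemma ins_catr q x A y B : (size A < q)%N ->
  ins q x (A ++ y :: B) = A ++ y :: ins (q - size A).-1 x B.
Proof. by elim: A q => [|a A IH] [|q] // Aq; rewrite cat_cons ins_cons (IH q Aq) /= subSS. Qed.

Lemma ins_size x l : ins (size l) x l = l ++ [:: x].
Proof. by rewrite /ins take_size drop_size. Qed.

Lemma ins_insl q j x w l : (j <= q)%N -> (q <= size l)%N ->
  ins q.+1 x (ins j w l) = ins j w (ins q x l).
Proof.
elim: l q j => [|a l IH] q [|j] //= jq ql; rewrite ?ins0 //; first by case: q jq ql.
by case: q jq ql => [|q] // jq ql; rewrite !ins_cons IH.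
Qed.

Lemma ins_insr q j x w l : (q <= j)%N -> (j <= size l)%N ->
  ins q x (ins j w l) = ins j.+1 w (ins q x l).
Proof.
elim: l q j => [|a l IH] [|q] j //= qj jl; rewrite ?ins0 //; first by case: j qj jl.
by case: j qj jl => [|j] // qj jl; rewrite !ins_cons IH.
Qed.

Lemma split_at2 (l : seq dpath) j (d : dpath) : (j.+1 < size l)%N ->
  exists A a b B, [/\ l = A ++ a :: b :: B, size A = j, nth d l j = a & nth d l j.+1 = b].
Proof.
move=> jl; exists (take j l), (nth d l j), (nth d l j.+1), (drop j.+2 l); split => //.
- by rewrite -(drop_nth d jl) -(drop_nth d (ltnW jl)) cat_take_drop.
- by rewrite size_take (ltn_trans (ltnSn j) jl).
Qed.

Lemma split_at1 (l : seq dpath) j (d : dpath) : (j < size l)%N ->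
  exists A a B, [/\ l = A ++ a :: B, size A = j & nth d l j = a].
Proof.
move=> jl; exists (take j l), (nth d l j), (drop j.+1 l); split => //.
- by rewrite -(drop_nth d jl) cat_take_drop.
- by rewrite size_take jl.
Qed.

Lemma face_dual_cat psi A a b B :
  face_dual psi (A ++ a :: b :: B) (size A) = ofun (pmul a b) (fun y => psi (A ++ y :: B)).
Proof.
have -> : face_dual psi (A ++ a :: b :: B) (size A) =
    ofun (pmul (nth a (A ++ a :: b :: B) (size A)) (nth a (A ++ a :: b :: B) (size A).+1))
      (fun x => psi (take (size A) (A ++ a :: b :: B) ++ x :: drop (size A).+2 (A ++ a :: b :: B))).
  case: A => [|a0 A] //=; rewrite (@set_nth_default _ _ a a0) ?size_cat //=; last by lia.
  by rewrite (@set_nth_default _ _ a a0 (size A).+1) // size_cat /=; lia.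
rewrite nth_cat ltnn subnn nth_cat ltnNge leqnSn /= subSnn.
apply: eq_ofun => y; rewrite take_size_cat // drop_cat ifN; last by lia.
by rewrite -addn2 addnC addnK /= drop0.
Qed.

Lemma pmul_ev a v : pmul a (ev v) = if ptgt a == v then Some a else None.
Proof. by case: a => a1 a2; rewrite /pmul /ev /= cats0. Qed.

Lemma pmul_ev_l a v : pmul (ev v) a = if v == a.1 then Some a else None.
Proof.
case: a => a1 a2; rewrite /pmul /ev /=.
by change (ptgt (v, [::])) with v; case: eqP => // ->.
Qed.

Lemma face_dual_ins_lt psi t p j x : (j < p)%N -> (p < size t)%N ->
  face_dual psi (ins p.+1 x t) j = face_dual (fun s => psi (ins p x s)) t j.
Proof.
move=> jp pt; have [A [a [b [B [-> Aj _ _]]]]] := @split_at2 t j x ltac:(lia).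
rewrite -Aj ins_catr; last by lia.
have -> : (p.+1 - size A).-1 = (p - size A - 1).+1 by lia.
rewrite ins_cons !face_dual_cat; apply: eq_ofun => y.
by rewrite ins_catr; [congr (psi (_ ++ _ :: ins _ _ _)) | ]; lia.
Qed.

Lemma face_dual_ins_gt psi t p j x : (p.+1 < j)%N -> (j < size t)%N ->
  face_dual psi (ins p.+1 x t) j = face_dual (fun s => psi (ins p.+1 x s)) t j.-1.
Proof.
case: j => [|j] // pj jt; have [A [a [b [B [-> Aj _ _]]]]] := @split_at2 t j x jt.
rewrite /= -Aj ins_catl; last by lia.
rewrite -(size_ins p.+1 x A) !face_dual_cat.
by apply: eq_ofun => y; rewrite ins_catl //; lia.
Qed.

Lemma face_dual_ins_ev_left psi t p v d : (p < size t)%N ->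
  face_dual psi (ins p.+1 (ev v) t) p = (ptgt (nth d t p) == v)%:R * psi t.
Proof.
move=> pt; have [A [a [B [-> Ap ->]]]] := @split_at1 t p d pt.
rewrite -Ap ins_catr // subSn // subnn ins0 face_dual_cat pmul_ev.
exact: ofun_if.
Qed.

Lemma face_dual_ins_ev_right psi t p v d : (p.+1 < size t)%N ->
  face_dual psi (ins p.+1 (ev v) t) p.+1 = (v == (nth d t p.+1).1)%:R * psi t.
Proof.
move=> pt; have [A [a [b [B [-> Ap _ ->]]]]] := @split_at2 t p d pt.
rewrite -Ap ins_catr // subSn // subnn ins0 -cat_rcons -(size_rcons A a).
by rewrite face_dual_cat pmul_ev_l ofun_if cat_rcons.
Qed.

Lemma last_face_dual_ins psi t p x : (p.+1 < size t)%N ->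
  last_face_dual psi (ins p.+1 x t) = last_face_dual (fun s => psi (ins p.+1 x s)) t.
Proof.
case: t => [|a0 t] //; case/lastP: t => [|R r] // pt.
rewrite ins_cons -cats1 ins_catl; last by move: pt; rewrite /= size_rcons; lia.
rewrite /last_face_dual !cats1 !last_rcons; apply: eq_ofun => y.
by rewrite !size_rcons /= -!cats1 !take_size_cat.
Qed.

Lemma last_face_dual_ins_ev psi t v d : (0 < size t)%N ->
  last_face_dual psi (ins (size t) (ev v) t) = (v == (nth d t 0).1)%:R * psi t.
Proof.
case: t => [|a0 t] // _; rewrite ins_size cat_cons /last_face_dual cats1 last_rcons.
by rewrite size_rcons /= -cats1 take_size_cat // pmul_ev_l ofun_if.
Qed.

End HochschildDual.

Lemma sign_sqr p : (-1) ^+ p * (-1) ^+ p = 1 :> CC.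
Proof. by rewrite -exprMn mulrNN mulr1 expr1n. Qed.

(* The transpose of b h + h b = [e_v, -] on the pure tensor t, for h inserting e_v.
   Faces away from the inserted e_v cancel in pairs between b h and h b; the two
   faces touching e_v test the source and target of the neighbouring path. *)
Section CartanIdentity.
Variables (n : nat) (Arr : finType) (src tgt : Arr -> 'I_n).
Variables (psi : seq (dpath n Arr) -> CC) (v : 'I_n) (a0 : dpath n Arr) (r : seq (dpath n Arr)).
Local Notation face_dual := (face_dual src tgt).
Local Notation last_face_dual := (last_face_dual src tgt).
Local Notation t := (a0 :: r).
Local Notation m := (size r).
Local Notation x := (ev Arr v).

Let face_ins j q := face_dual (fun s => psi (ins q.+1 x s)) t j.
Let last_face_ins q := last_face_dual (fun s => psi (ins q.+1 x s)) t.
Let tgt_ev p := (ptgt src tgt (nth a0 t p) == v)%:R * psi t.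
Let src_ev p := (v == (nth a0 t p).1)%:R * psi t.

Lemma bdual_insert_homotopy :
  bdual src tgt (fun s => \sum_(0 <= q < m) (-1)^+q.+1 * psi (ins q.+1 x s)) t =
  \sum_(0 <= q < m) (-1)^+q.+1 * (\sum_(0 <= j < q.+1) (-1)^+j * face_ins j q
      + \sum_(q.+1 <= j < m) (-1)^+j * face_ins j q + (-1)^+m * last_face_ins q).
Proof.
rewrite /bdual pairing_sumr; apply: eq_big_nat => q /andP[_ qm].
rewrite pairing_scaler -/(bdual _ _ _ _) bdual_cons; last by lia.
by rewrite -(big_cat_nat _ qm).
Qed.

Lemma bdual_ins_ev p : (p < m.+1)%N ->
  bdual src tgt psi (ins p.+1 x t) =
  \sum_(0 <= j < p) (-1)^+j * face_ins j p.-1 + (-1)^+p * tgt_ev p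
  + (if (p < m)%N then (-1)^+p.+1 * src_ev p.+1
                       + \sum_(p.+1 <= j < m) (-1)^+j.+1 * face_ins j p else 0)
  + (-1)^+m.+1 * (if (p < m)%N then last_face_ins p else src_ev 0).
Proof.
move=> pm; rewrite ins_cons bdual_cons ?size_ins // -ins_cons.
congr (_ + _); last first.
  case: ltnP => [pm'|mp]; first by rewrite last_face_dual_ins //= ltnS.
  have -> : p.+1 = size t by rewrite /=; lia.
  by rewrite (last_face_dual_ins_ev _ _ _ _ a0).
rewrite (big_cat_nat (leq0n p)) //; last exact: ltnW.
rewrite -addrA; congr (_ + _).
  apply: eq_big_nat => j /andP[_ jp]; rewrite face_dual_ins_lt //=.
  by rewrite /face_ins prednK //; lia.
rewrite big_ltn // (face_dual_ins_ev_left _ _ _ _ a0) //; congr (_ + _).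
case: ltnP => [pm'|mp]; last by rewrite big_geq.
rewrite big_ltn // (face_dual_ins_ev_right _ _ _ _ a0) //; congr (_ + _).
rewrite big_add1; apply: eq_big_nat => j /andP[pj jm].
by rewrite face_dual_ins_gt //=; lia.
Qed.

Lemma sum_bdual_ins_ev :
  \sum_(0 <= p < m.+1) (-1)^+p.+1 * bdual src tgt psi (ins p.+1 x t) =
    \sum_(0 <= q < m) (-1)^+q.+2 * \sum_(0 <= j < q.+1) (-1)^+j * face_ins j q
  - \sum_(0 <= p < m.+1) tgt_ev p
  + \sum_(0 <= q < m) (src_ev q.+1
                       + (-1)^+q.+1 * \sum_(q.+1 <= j < m) (-1)^+j.+1 * face_ins j q)
  + \sum_(0 <= q < m) (-1)^+q.+1 * ((-1)^+m.+1 * last_face_ins q) + src_ev 0.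
Proof.
have -> : \sum_(0 <= p < m.+1) (-1)^+p.+1 * bdual src tgt psi (ins p.+1 x t) =
    \sum_(0 <= p < m.+1) (-1)^+p.+1 * \sum_(0 <= j < p) (-1)^+j * face_ins j p.-1
  - \sum_(0 <= p < m.+1) tgt_ev p
  + \sum_(0 <= p < m.+1) (-1)^+p.+1 * (if (p < m)%N then (-1)^+p.+1 * src_ev p.+1
        + \sum_(p.+1 <= j < m) (-1)^+j.+1 * face_ins j p else 0)
  + \sum_(0 <= p < m.+1)
      (-1)^+p.+1 * ((-1)^+m.+1 * (if (p < m)%N then last_face_ins p else src_ev 0)).
  rewrite -sumrN -!big_split; apply: eq_big_nat => p /andP[_ pm] /=.
  have tgt_sign : (-1)^+p.+1 * ((-1)^+p * tgt_ev p) = - tgt_ev p.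
    by rewrite mulrA exprS mulN1r mulNr sign_sqr mulN1r.
  by rewrite bdual_ins_ev // !mulrDr tgt_sign.
rewrite -[in RHS]addrA; congr (_ + _ + _ + _).
- by rewrite big_nat_recl // [X in _ * X]big_geq // mulr0 add0r.
- rewrite big_nat_recr //= ltnn mulr0 addr0; apply: eq_big_nat => q /andP[_ qm].
  by rewrite qm mulrDr mulrA sign_sqr mul1r.
- rewrite big_nat_recr //= ltnn mulrA sign_sqr mul1r; f_equal.
  by apply: eq_big_nat => q /andP[_ qm]; rewrite qm.
Qed.

Lemma cartan_identity_ev :
  \sum_(0 <= p < m.+1) (-1)^+p.+1 * bdual src tgt psi (ins p.+1 x t)
  + bdual src tgt (fun s => \sum_(0 <= q < m) (-1)^+q.+1 * psi (ins q.+1 x s)) t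
  = psi t * \sum_(y <- t) ((y.1 == v)%:R - (ptgt src tgt y == v)%:R).
Proof.
rewrite sum_bdual_ins_ev bdual_insert_homotopy.
set T := \sum_(0 <= p < m.+1) tgt_ev p.
have -> : forall a c w h : CC, a - T + c + w + src_ev 0 + h = (a + c + w + h) - T + src_ev 0.
  by move=> *; ring.
rewrite -!big_split /=.
have -> : \sum_(0 <= q < m) ((-1)^+q.+2 * \sum_(0 <= j < q.+1) (-1)^+j * face_ins j q
    + (src_ev q.+1 + (-1)^+q.+1 * \sum_(q.+1 <= j < m) (-1)^+j.+1 * face_ins j q)
    + (-1)^+q.+1 * ((-1)^+m.+1 * last_face_ins q)
    + (-1)^+q.+1 * (\sum_(0 <= j < q.+1) (-1)^+j * face_ins j q
       + \sum_(q.+1 <= j < m) (-1)^+j * face_ins j q + (-1)^+m * last_face_ins q))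
  = \sum_(0 <= q < m) src_ev q.+1.
  apply: eq_big_nat => q _.
  have -> : \sum_(q.+1 <= j < m) (-1)^+j.+1 * face_ins j q
            = - \sum_(q.+1 <= j < m) (-1)^+j * face_ins j q.
    by rewrite -sumrN; apply: eq_bigr => j _; rewrite exprS mulN1r mulNr.
  rewrite !exprS; ring.
have src_sum : psi t * \sum_(y <- t) (y.1 == v)%:R
                = src_ev 0 + \sum_(0 <= q < m) src_ev q.+1.
  rewrite mulr_sumr (big_nth a0) big_nat_recl // /src_ev eq_sym mulrC.
  by congr (_ + _); apply: eq_bigr => q _; rewrite eq_sym mulrC.
have tgt_sum : psi t * \sum_(y <- t) (ptgt src tgt y == v)%:R = T.
  by rewrite mulr_sumr (big_nth a0); apply: eq_bigr => p _; rewrite mulrC.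
have split_sum : psi t * \sum_(y <- t) ((y.1 == v)%:R - (ptgt src tgt y == v)%:R)
  = psi t * \sum_(y <- t) (y.1 == v)%:R - psi t * \sum_(y <- t) (ptgt src tgt y == v)%:R.
  by rewrite sumrB mulrBr.
by rewrite split_sum src_sum tgt_sum addrAC [_ + src_ev 0]addrC.
Qed.

End CartanIdentity.

Section Homotopy.
Variables (n : nat) (Arr : finType) (src tgt : Arr -> 'I_n) (lam : 'I_n -> CC).
Local Notation chain := (chain n Arr).
Local Notation ptgt := (ptgt src tgt).
Local Notation bd := (bdual src tgt).

Definition homotopy (m : nat) (X : chain) : chain :=
  flatten [seq flatten [seq [seq ((-1)^+p.+1 * lam v * y.1, ins p.+1 (ev Arr v) y.2) | y <- X]
     | v <- enum 'I_n] | p <- index_iota 0 m].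

Definition homotopy_dual m psi s :=
  \sum_(0 <= p < m) \sum_(v <- enum 'I_n) (-1)^+p.+1 * lam v * psi (ins p.+1 (ev Arr v) s).

Lemma pairing_homotopy m X psi : pairing (homotopy m X) psi = pairing X (homotopy_dual m psi).
Proof.
rewrite /homotopy pairing_flatten /homotopy_dual pairing_sumr; apply: eq_bigr => p _.
rewrite pairing_flatten pairing_sumr; apply: eq_bigr => v _.
by rewrite pairing_map /pairing; apply: eq_bigr => y _ /=; rewrite mulrCA mulrA.
Qed.

Lemma homotopy_dualE m psi s : homotopy_dual m psi s =
  \sum_(v <- enum 'I_n) lam v * \sum_(0 <= p < m) (-1)^+p.+1 * psi (ins p.+1 (ev Arr v) s).
Proof.
rewrite /homotopy_dual exchange_big; apply: eq_bigr => v _; rewrite mulr_sumr.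
by apply: eq_bigr => p _; rewrite -mulrA mulrCA.
Qed.

Lemma cartan_identity m t psi : size t = m.+1 ->
  homotopy_dual m.+1 (bd psi) t + bd (homotopy_dual m psi) t =
  psi t * \sum_(y <- t) (lam y.1 - lam (ptgt y)).
Proof.
case: t => [|a0 r] // [<-] {m}; rewrite homotopy_dualE.
have -> : bd (homotopy_dual (size r) psi) (a0 :: r) = \sum_(v <- enum 'I_n) lam v *
    bd (fun s => \sum_(0 <= q < size r) (-1)^+q.+1 * psi (ins q.+1 (ev Arr v) s)) (a0 :: r).
  rewrite /bdual; under eq_bigr => v _ do rewrite -pairing_scaler.
  by rewrite -pairing_sumr; apply: eq_pairing => y _; rewrite homotopy_dualE.
rewrite -big_split; transitivity (\sum_(v <- enum 'I_n) psi (a0 :: r) *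
    \sum_(y <- a0 :: r) lam v * ((y.1 == v)%:R - (ptgt y == v)%:R)).
  by apply: eq_bigr => v _ /=; rewrite -mulrDr cartan_identity_ev mulrCA mulr_sumr.
rewrite -mulr_sumr exchange_big; congr (_ * _); apply: eq_bigr => y _.
transitivity (\sum_(v <- enum 'I_n) ((y.1 == v)%:R * lam v - (ptgt y == v)%:R * lam v)).
  by apply: eq_bigr => v _; rewrite mulrBr ![lam v * _]mulrC.
by rewrite sumrB !sum_delta ?enum_uniq ?mem_enum.
Qed.

Lemma valid_chain_homotopy m X :
  valid_chain src tgt m X -> valid_chain src tgt m.+1 (homotopy m X).
Proof.
move=> /allP validX; apply/allP => z /flattenP[_ /mapP[p _ ->]].
move=> /flattenP[_ /mapP[v _ ->] /mapP[y yX ->]] /=.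
by have /andP[/eqP <- yv] := validX y yX; rewrite size_ins eqxx all_ins yv.
Qed.

(* Inserting e_v into a generator of the kernel gives again a generator: the
   slot carrying the relation is shifted when the insertion point precedes it. *)
Definition homotopy_gen (p : nat) (v : 'I_n) (g : gen n Arr) : gen n Arr :=
  let: (k, j, others, u, w) := g in
  ((-1)^+p.+1 * lam v * k, if (p.+1 <= j)%N then j.+1 else j,
   if (p.+1 <= j)%N then ins p.+1 (ev Arr v) others else ins p (ev Arr v) others, u, w).

Lemma gen_chain_homotopy_gen m p v g : valid_gen src tgt m g -> (p < m)%N ->
  gen_chain src tgt (homotopy_gen p v g) =
  [seq ((-1)^+p.+1 * lam v * y.1, ins p.+1 (ev Arr v) y.2) | y <- gen_chain src tgt g].
Proof.
case: g => [[[[k j] o] u] w] /= /and5P[jm /eqP o_size _ _ _] pm.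
rewrite -map_comp; apply: eq_map => y /=; congr (_, _); first by rewrite mulrA.
case: ifP => pj; first by rewrite (ins_insr (ev Arr v) y.2 pj) // o_size; lia.
by rewrite (ins_insl (ev Arr v) y.2) ?o_size //; lia.
Qed.

Lemma valid_homotopy_gen m p v g : valid_gen src tgt m g -> (p < m)%N ->
  valid_gen src tgt m.+1 (homotopy_gen p v g).
Proof.
case: g => [[[[k j] o] u] w] /= /and5P[jm /eqP o_size o_valid u_valid w_valid] pm.
apply/and5P; split => //; case: ifP => _ //; try lia.
- by rewrite size_ins o_size; apply/eqP; lia.
- by rewrite size_ins o_size; apply/eqP; lia.
- by rewrite all_ins o_valid.
- by rewrite all_ins o_valid.
Qed.

Lemma inJ_homotopy m X : inJ src tgt m X -> inJ src tgt m.+1 (homotopy m X).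
Proof.
move=> [G [validG coeffX]].
exists (flatten [seq flatten [seq [seq homotopy_gen p v g | v <- enum 'I_n]
   | p <- index_iota 0 m] | g <- G]); split.
  apply/allP => _ /flattenP[_ /mapP[g gG ->] /flattenP[_ /mapP[p pm ->] /mapP[v _ ->]]].
  by apply: valid_homotopy_gen; [exact: (allP validG) | move: pm; rewrite mem_index_iota].
move=> key; rewrite !coeff_pairing pairing_homotopy (eq_coeff_pairing _ coeffX).
rewrite !pairing_flatten big_flatten big_map; apply: eq_big_seq => g gG.
rewrite -pairing_homotopy /homotopy pairing_flatten big_flatten big_map.
apply: eq_big_seq => p; rewrite mem_index_iota => /andP[_ pm].
rewrite pairing_flatten big_map; apply: eq_bigr => v _.
by rewrite (gen_chain_homotopy_gen v (allP validG g gG) pm).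
Qed.

End Homotopy.

Section InnerDerivation.
Variables (n : nat) (Arr : finType) (src tgt : Arr -> 'I_n) (lam : 'I_n -> CC).
Hypothesis lam_arrow : forall a, lam (tgt a) = lam (src a) + 2^-1.
Local Notation dpath := (dpath n Arr).
Local Notation chain := (chain n Arr).
Local Notation ptgt := (ptgt src tgt).

Lemma potential_composable u l : composable src tgt u l ->
  lam u - lam (foldl (fun _ x => dtgt src tgt x) u l)
  = (count (@is_star Arr) l)%:R - (size l)%:R / 2.
Proof.
elim: l u => [|y l IH] u; first by rewrite subrr mul0r subr0.
rewrite [composable _ _ _ _]/= => /andP[/eqP <- yl].
have arrow_drop : lam (dsrc src tgt y) - lam (dtgt src tgt y) = (is_star y)%:R - 2^-1.
  by case: y {yl} => a; rewrite [nat_of_bool _]/= /dsrc /dtgt lam_arrow; field.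
rewrite [foldl _ _ _]/= -[LHS](subrKA (lam (dtgt src tgt y))) IH // arrow_drop.
rewrite -[count _ (y :: l)]/(is_star y + count (@is_star Arr) l)%N.
rewrite -[size (y :: l)]/(size l).+1.
by rewrite natrD -addn1 natrD; field.
Qed.

Lemma potential_path (p : dpath) : valid_path src tgt p ->
  lam p.1 - lam (ptgt p) = (pstar p)%:R - (plen p)%:R / 2.
Proof. by case: p => u l; apply: potential_composable. Qed.

Lemma potential_tensor (s : seq dpath) : all (valid_path src tgt) s ->
  \sum_(y <- s) (lam y.1 - lam (ptgt y)) =
  (\sum_(y <- s) pstar y)%:R - (key_deg s)%:R / 2.
Proof.
rewrite /key_deg; elim: s => [|y s IH]; first by rewrite !big_nil mul0r subr0.
by case/andP => yv sv; rewrite !big_cons potential_path // IH // !natrD; field.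
Qed.

Lemma lieD_cartan i d (c : chain) psi :
  valid_chain src tgt i.+1 c -> homogeneous d c ->
  pairing (chain_sub (chain_sub (lieD c) (chain_scale (d%:R / 2%:R) c))
                     (hoch_b src tgt (homotopy lam i.+1 c))) psi =
  pairing (homotopy lam i (hoch_b src tgt c)) psi.
Proof.
move=> /allP validc /allP homc.
rewrite !pairing_sub pairing_scale pairing_hoch_b !pairing_homotopy pairing_hoch_b pairing_lieD.
rewrite -pairing_scaler -!pairing_subr; apply: eq_pairing => x xc.
have /andP[/eqP x_size x_valid] := validc x xc; have /eqP x_deg := homc x xc.
have := cartan_identity src tgt lam psi x_size; rewrite potential_tensor // x_deg => cartan.
by rewrite -[RHS](addKr (homotopy_dual lam i.+1 (bdual src tgt psi) x.2)) cartan; ring.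
Qed.

Lemma lieD_homotopic i d (c : chain) :
  valid_chain src tgt i.+1 c -> homogeneous d c -> inJ src tgt i (hoch_b src tgt c) ->
  exists c' : chain, valid_chain src tgt i.+2 c' /\
    inJ src tgt i.+1 (chain_sub (chain_sub (lieD c) (chain_scale (d%:R / 2%:R) c))
                                (hoch_b src tgt c')).
Proof.
move=> validc homc /(inJ_homotopy lam) [G [validG coeffG]].
exists (homotopy lam i.+1 c); split; first exact: valid_chain_homotopy.
by exists G; split => // key; rewrite coeff_pairing lieD_cartan // -coeff_pairing.
Qed.

End InnerDerivation.

Section DynkinPotential.
Variables (n : nat) (Arr : finType) (src tgt : Arr -> 'I_n).
Variables (ty : dynkin_type) (sigma tau : 'I_n -> 'I_n).
Hypotheses (ty_ok : dynkin_ok ty n) (tauK : cancel tau sigma).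
Hypothesis narrows_sigma :
  forall i j, narrows src tgt (sigma i) (sigma j) = nat_of_bool (dynkin_edge ty i j).

Definition oriented_edge (i j : nat) : bool :=
  [exists a : Arr, (tau (src a) == i :> nat) && (tau (tgt a) == j :> nat)].

Definition edge_step (i j : nat) : CC := if oriented_edge i j then 2^-1 else - 2^-1.

Fixpoint chain_potential (k : nat) : CC :=
  if k is k'.+1 then chain_potential k' + edge_step k' k'.+1 else 0.

Definition branch_point : nat := if ty is TypeD then (n - 3)%N else 2%N.

(* Integrate [edge_step] along the chain 0 - 1 - ... and, in types D and E,
   across the extra edge from the branch point to the vertex n - 1. *)
Definition dynkin_potential (k : nat) : CC :=
  if ty is TypeA then chain_potential k
  else if k == n.-1 then chain_potential branch_point + edge_step branch_point n.-1
  else chain_potential k.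

Lemma dynkin_potential_edge (i j : nat) : (i < n)%N -> (j < n)%N ->
  dynkin_edge0 ty n i j -> dynkin_potential j - dynkin_potential i = edge_step i j.
Proof.
rewrite /dynkin_potential /branch_point.
case: ty ty_ok => /= ok i_n j_n; first by move/eqP ->; rewrite addrAC subrr add0r.
all: case/orP => [/andP[/eqP -> j_le] | /andP[/eqP -> /eqP ->]].
all: rewrite ?subn1 ?eqxx !ifN; try lia.
all: by rewrite addrAC subrr add0r.
Qed.

Lemma dynkin_edge0_irrefl (i : nat) : dynkin_edge0 ty n i i = false.
Proof. by case: ty ty_ok => /= ok; apply/negbTE; lia. Qed.

Lemma narrows_arrow a : (0 < narrows src tgt (src a) (tgt a))%N.
Proof. by apply/card_gt0P; exists a; rewrite inE !eqxx. Qed.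

Lemma narrows_tau a :
  narrows src tgt (src a) (tgt a) = nat_of_bool (dynkin_edge ty (tau (src a)) (tau (tgt a))).
Proof. by rewrite -narrows_sigma !tauK. Qed.

Lemma arrow_dynkin_edge a : dynkin_edge ty (tau (src a)) (tau (tgt a)).
Proof. by have := narrows_arrow a; rewrite narrows_tau; case: dynkin_edge. Qed.

Lemma no_reverse_arrow a : oriented_edge (tau (tgt a)) (tau (src a)) = false.
Proof.
apply/negbTE/existsP => -[b /andP[/eqP/val_inj b_src /eqP/val_inj b_tgt]].
have {}b_src : src b = tgt a by rewrite -(tauK (src b)) b_src tauK.
have {}b_tgt : tgt b = src a by rewrite -(tauK (tgt b)) b_tgt tauK.
have [ab|ab] := eqVneq a b.
  have loop : src a = tgt a by rewrite -b_src ab.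
  by move: (arrow_dynkin_edge a); rewrite /dynkin_edge loop !dynkin_edge0_irrefl.
have : (2 <= narrows src tgt (src a) (tgt a))%N.
  rewrite (_ : 2%N = #|[set a; b]|); last by rewrite cards2 ab.
  apply: subset_leq_card; apply/subsetP => z; rewrite !inE.
  by case/orP => /eqP ->; rewrite ?b_src ?b_tgt !eqxx ?orbT.
by rewrite narrows_tau; case: dynkin_edge.
Qed.

Lemma dynkin_potential_arrow a :
  dynkin_potential (tau (tgt a)) = dynkin_potential (tau (src a)) + 2^-1.
Proof.
apply/eqP; rewrite addrC -subr_eq; apply/eqP.
case/orP: (arrow_dynkin_edge a) => edge.
  rewrite dynkin_potential_edge // /edge_step ifT //.
  by apply/existsP; exists a; rewrite !eqxx.
rewrite -opprB dynkin_potential_edge // /edge_step no_reverse_arrow.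
exact: opprK.
Qed.

End DynkinPotential.

Lemma ADE_potential (n : nat) (Arr : finType) (src tgt : Arr -> 'I_n) :
  is_ADE_quiver src tgt -> exists lam : 'I_n -> CC, forall a, lam (tgt a) = lam (src a) + 2^-1.
Proof.
case=> ty [sigma [ty_ok [tau _ tauK] narrows_sigma]].
by exists (fun x => dynkin_potential src tgt ty tau (tau x)) => a;
  apply: dynkin_potential_arrow.
Qed.

Theorem mainTheorem1 (n : nat) (Arr : finType) (src tgt : Arr -> 'I_n) :
  is_ADE_quiver src tgt ->
  forall (i d : nat) (c : chain n Arr),
    valid_chain src tgt i.+1 c ->
    homogeneous d c ->
    inJ src tgt i (hoch_b src tgt c) ->
    exists c' : chain n Arr,
      valid_chain src tgt i.+2 c' /\
      inJ src tgt i.+1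
        (chain_sub (chain_sub (lieD c) (chain_scale (d%:R / 2%:R) c))
                   (hoch_b src tgt c')).
Proof.
move=> ADE i d c; have [lam lam_arrow] := ADE_potential ADE.
exact: lieD_homotopic.
Qed.
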